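(* Assume the standing assumptions below, let $\gamma\in[0,\gamma_* )$ and let $U(\cdot;\gamma)$ be the finite wavefront with speed $c(\gamma)$. Let $\phi_{c(\gamma)}$ denote the flux $|(U^m)'|^{p-1}$ written as a function of the value $U\in(0,1)$ along the wavefront. Then, as $U\to1^-$, $$\phi_{c(\gamma)}(U)=C_{p,\gamma}(1-U)^{\mu_{p,\gamma}}(1+o(1)),$$ where $\mu_{p,\gamma}=p-1$ and $C_{p,\gamma}=(m|h'(1)|/c(\gamma))^{p-1}$ if $p>2$; $\mu_{p,\gamma}=1$ and $C_{p,\gamma}=\frac{-(c(\gamma)+\gamma m)+\sqrt{(c(\gamma)+\gamma m)^2+4m|h'(1)|}}{2}$ if $p=2$; and $\mu_{p,\gamma}=1$, $C_{p,\gamma}=|h'(1)|/\gamma$ if $p\in(1,2)$ and $\gamma>0$.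
   Context: Standing assumptions: $m>0$, $p>1$ with $m(p-1)>1$. $h\in C^1([0,\infty))$ satisfies $h(0)=0$, and for some $a\in[0,1)$: $h\le0$ on $[0,a]$, $h>0$ on $(a,1)$, $h<0$ on $(1,\infty)$, $h'(1)<0$; if $a>0$ also $\int_0^1h(u)u^{m-1}du>0$. For $\gamma\in[0,\gamma_* )$ ($\gamma_*>0$ small), $c(\gamma)>0$ denotes the unique speed for which the one-dimensional equation $u_t=(|(u^m)_r|^{p-2}(u^m)_r)_r+\gamma|(u^m)_r|^{p-2}(u^m)_r+h(u)$ has a finite wavefront, i.e. a travelling wave $U(r-ct)$ with $U$ continuous, nonincreasing, $U(-\infty)=1$, $U=0$ on some $[\xi_0,\infty)$ and $U>0$ on $(-\infty,\xi_0)$; it is unique up to translation. *)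

From Stdlib Require Import Reals Lra.
From Coquelicot Require Import Coquelicot.
Open Scope R_scope.

(* x^y for x >= 0 with the convention 0^y = 0 (used with y > 0 only). *)
Definition spow (x y : R) : R := if Rle_dec x 0 then 0 else Rpower x y.

(* |s|^(p-2) s, with value 0 at s = 0. *)
Definition pflux (p s : R) : R :=
  if Rlt_dec 0 s then Rpower s (p - 1)
  else if Rlt_dec s 0 then - Rpower (- s) (p - 1) else 0.

Definition standing_h (m a : R) (h : R -> R) : Prop :=
  h 0 = 0 /\
  (forall x, 0 <= x -> ex_derive h x) /\
  (forall x, 0 <= x ->
     filterlim (Derive h) (within (fun y => 0 <= y) (locally x)) (locally (Derive h x))) /\
  0 <= a < 1 /\
  (forall u, 0 <= u <= a -> h u <= 0) /\
  (forall u, a < u < 1 -> 0 < h u) /\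
  (forall u, 1 < u -> h u < 0) /\
  Derive h 1 < 0 /\
  (0 < a -> 0 < RInt (fun u => h u * Rpower u (m - 1)) 0 1).

(* U is a finite wavefront with speed c for
   u_t = (|(u^m)_r|^{p-2}(u^m)_r)_r + gam |(u^m)_r|^{p-2}(u^m)_r + h(u),
   i.e. with V = U^m and F = |V'|^{p-2} V' the profile equation
   -c U' = F' + gam F + h(U) holds where U > 0, and the flux V' is continuous
   on R (so it vanishes at the front). *)
Definition finite_wavefront (m p gam : R) (h : R -> R) (c : R) (U : R -> R) : Prop :=
  (forall x, continuous U x) /\
  (forall x y, x <= y -> U y <= U x) /\
  is_lim U m_infty 1 /\
  (forall x, ex_derive (fun y => spow (U y) m) x) /\
  (forall x, continuous (Derive (fun y => spow (U y) m)) x) /\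
  exists xi0 : R,
    (forall x, xi0 <= x -> U x = 0) /\
    (forall x, x < xi0 -> 0 < U x) /\
    (forall x, x < xi0 ->
       ex_derive U x /\
       ex_derive (fun y => pflux p (Derive (fun z => spow (U z) m) y)) x /\
       - c * Derive U x =
         Derive (fun y => pflux p (Derive (fun z => spow (U z) m) y)) x
         + gam * pflux p (Derive (fun z => spow (U z) m) x)
         + h (U x)).

Definition flux_asymp (m p : R) (U : R -> R) (C mu : R) : Prop :=
  forall eps, 0 < eps -> exists delta, 0 < delta /\
    forall x, 1 - delta < U x < 1 ->
      Rabs (spow (Rabs (Derive (fun y => spow (U y) m) x)) (p - 1)
            - C * Rpower (1 - U x) mu)
      <= eps * (C * Rpower (1 - U x) mu).

From Stdlib Require Import Reals Lra Classical.
From Coquelicot Require Import Coquelicot.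
Open Scope R_scope.

(* Along the front set w = |(U^m)'| and phi = w^(p-1).  Where U > 0 the profile
   equation reads  U' = - w / (m U^(m-1))  and  phi' = c U' - gam phi + h(U),
   and we study phi as U -> 1-, i.e. as x -> -oo.

   The argument is a comparison principle.  On a region 1 - d < U < 1, the
   difference phi - A (1 - U)^r cannot become positive (resp. negative) if the
   profile equation forces it to decrease where it is >= 0 (resp. to increase
   where it is <= 0): phi and 1 - U become arbitrarily small to the left of every
   point, so a first crossing would contradict the sign of the derivative.
   Linearising h and the diffusivity m U^(m-1) at U = 1 shows that these sign
   conditions hold for every A above, resp. below, the claimed constant, in each
   regime: p > 2 (convection balances reaction), p = 2 (all terms are linear) and
   p < 2 with gam > 0 (damping balances reaction).  Two-sided bounds then give
   phi = C (1 - U)^mu (1 + o(1)). *)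

(** ** Elementary real analysis *)

Lemma continuous_eps (g : R -> R) s : continuous g s ->
  forall eps, 0 < eps -> exists d, 0 < d /\
    forall y, Rabs (y - s) < d -> Rabs (g y - g s) < eps.
Proof.
  intros Hc eps He.
  apply continuity_pt_filterlim in Hc.
  destruct (Hc eps He) as [d [Hd H]].
  exists d; split; auto. intros y Hy.
  destruct (Req_dec y s) as [->|Hne].
  - rewrite Rminus_eq_0, Rabs_R0; auto.
  - apply H. split; [split; [exact I|auto]|]. exact Hy.
Qed.

Lemma derive_cont (g : R -> R) x : ex_derive g x -> continuous g x.
Proof. exact (@ex_derive_continuous R_AbsRing R_NormedModule g x). Qed.

Lemma derive_pos_right (g : R -> R) x l : is_derive g x l -> 0 < l ->
  exists d, 0 < d /\ forall y, x < y < x + d -> g x < g y.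
Proof.
  intros H Hl. apply is_derive_Reals in H.
  destruct (H (l / 2) ltac:(lra)) as [d Hd].
  exists d; split; [apply cond_pos|].
  intros y Hy. specialize (Hd (y - x) ltac:(lra)).
  assert (Habs : Rabs (y - x) < d) by (rewrite Rabs_pos_eq; lra).
  specialize (Hd Habs). replace (x + (y - x)) with y in Hd by ring.
  apply Rabs_def2 in Hd. destruct Hd as [H1 H2].
  assert (Hq : l / 2 < (g y - g x) / (y - x)) by lra.
  apply Rmult_lt_compat_r with (r := y - x) in Hq; [|lra].
  replace ((g y - g x) / (y - x) * (y - x)) with (g y - g x) in Hq by (field; lra).
  nra.
Qed.

Lemma derive_neg_right (g : R -> R) x l : is_derive g x l -> l < 0 ->
  exists d, 0 < d /\ forall y, x < y < x + d -> g y < g x.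
Proof.
  intros H Hl.
  destruct (derive_pos_right (fun t => - g t) x (- l) (is_derive_opp g x l H)
              ltac:(lra)) as [d [Hd Hy]].
  exists d; split; auto. intros y Hy'. specialize (Hy y Hy'). lra.
Qed.

Lemma derive_nonincreasing (g : R -> R) x :
  (forall s t, s <= t -> g t <= g s) -> ex_derive g x -> Derive g x <= 0.
Proof.
  intros Hmono Hd.
  destruct (Rle_or_lt (Derive g x) 0) as [|Hpos]; auto. exfalso.
  destruct (derive_pos_right g x _ (Derive_correct _ _ Hd) Hpos) as [d [Hd0 Hd1]].
  specialize (Hd1 (x + d / 2) ltac:(lra)).
  assert (g (x + d / 2) <= g x) by (apply Hmono; lra). lra.
Qed.

(* First-crossing principle: a function continuous on [a, b] with g a <= 0 < g b
   has a last zero before b, from which it must rise; so it cannot leave every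
   zero downwards. *)
Lemma no_upward_crossing (g : R -> R) a b : a < b ->
  (forall x, a <= x <= b -> continuous g x) -> g a <= 0 -> 0 < g b ->
  (forall x, a <= x < b -> g x = 0 ->
     exists d, 0 < d /\ forall y, x < y < x + d -> g y < 0) ->
  False.
Proof.
  intros Hab Hc Ha Hb Hz.
  set (E := fun x => a <= x <= b /\ g x <= 0).
  assert (Hbd : bound E) by (exists b; intros x [Hx _]; lra).
  assert (Hne : exists x, E x) by (exists a; split; [lra|auto]).
  destruct (completeness E Hbd Hne) as [s [Hub Hlub]].
  assert (Has : a <= s) by (apply Hub; split; [lra|auto]).
  assert (Hsb : s <= b) by (apply Hlub; intros x [Hx _]; lra).
  assert (Hgs : g s <= 0).
  { destruct (Rle_or_lt (g s) 0) as [|Hpos]; auto. exfalso.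
    destruct (continuous_eps g s (Hc s ltac:(lra)) (g s) Hpos) as [d [Hd Hd']].
    destruct (classic (exists e, E e /\ s - d / 2 < e)) as [[e [He He']]|Hn].
    - assert (e <= s) by (apply Hub; auto).
      specialize (Hd' e ltac:(rewrite Rabs_left1; lra)).
      destruct He as [_ He]. apply Rabs_def2 in Hd'. lra.
    - assert (s <= s - d / 2); [|lra].
      apply Hlub. intros x Hx. destruct (Rle_or_lt x (s - d / 2)); auto.
      exfalso; apply Hn; exists x; auto. }
  assert (Hsb' : s < b) by (destruct (Req_dec s b); [subst; lra|lra]).
  assert (Hgs0 : g s = 0).
  { destruct (Rle_or_lt 0 (g s)) as [|Hneg]; [lra|]. exfalso.
    destruct (continuous_eps g s (Hc s ltac:(lra)) (- g s) ltac:(lra)) as [d [Hd Hd']].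
    set (y := Rmin (s + d / 2) b).
    assert (Hy1 : s < y) by (unfold y; apply Rmin_glb_lt; lra).
    assert (Hy2 : y <= b) by (unfold y; apply Rmin_r).
    assert (Hy3 : y <= s + d / 2) by (unfold y; apply Rmin_l).
    specialize (Hd' y ltac:(rewrite Rabs_pos_eq; lra)). apply Rabs_def2 in Hd'.
    assert (y <= s) by (apply Hub; split; [lra|lra]). lra. }
  destruct (Hz s ltac:(lra) Hgs0) as [d [Hd Hd']].
  set (y := s + Rmin d (b - s) / 2).
  assert (Hm1 : 0 < Rmin d (b - s)) by (apply Rmin_glb_lt; lra).
  assert (Hm2 : Rmin d (b - s) <= d) by apply Rmin_l.
  assert (Hm3 : Rmin d (b - s) <= b - s) by apply Rmin_r.
  specialize (Hd' y ltac:(unfold y; lra)).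
  assert (y <= s) by (apply Hub; split; [unfold y; lra|lra]). unfold y in *; lra.
Qed.

Lemma mean_value (f : R -> R) a b : a < b ->
  (forall x, a <= x <= b -> ex_derive f x) ->
  exists t, a <= t <= b /\ f b - f a = Derive f t * (b - a).
Proof.
  intros Hab Hd.
  destruct (MVT_gen f a b (Derive f)) as [t [Ht Heq]].
  - intros x Hx. rewrite Rmin_left in Hx by lra. rewrite Rmax_right in Hx by lra.
    apply Derive_correct. apply Hd. lra.
  - intros x Hx. rewrite Rmin_left in Hx by lra. rewrite Rmax_right in Hx by lra.
    apply continuity_pt_filterlim. apply derive_cont. apply Hd. lra.
  - rewrite Rmin_left in Ht by lra. rewrite Rmax_right in Ht by lra.
    exists t. split; auto.
Qed.

Definition is_interval (P : R -> Prop) : Prop :=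
  forall x y t, P x -> P y -> x <= t <= y -> P t.

Lemma upper_barrier (P : R -> Prop) (g phi : R -> R) :
  is_interval P ->
  (forall x, P x -> ex_derive g x) ->
  (forall x, P x -> 0 <= g x -> Derive g x < 0) ->
  (forall x, P x -> g x <= phi x) ->
  (forall x eps, P x -> 0 < eps -> exists y, y <= x /\ P y /\ phi y < eps) ->
  forall x, P x -> g x <= 0.
Proof.
  intros HI Hd Hneg Hle Hlim x1 Px1.
  destruct (Rle_or_lt (g x1) 0) as [|Hg]; auto. exfalso.
  destruct (Hlim x1 (g x1) Px1 Hg) as [y [Hy [Py Hphi]]].
  destruct (Req_dec y x1) as [->|Hne].
  { specialize (Hle x1 Px1). lra. }
  assert (Hpos : forall t, y <= t <= x1 -> 0 < g t).
  { intros t Ht. destruct (Rle_or_lt (g t) 0) as [Hgt|]; auto. exfalso.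
    assert (Ht' : t < x1) by (destruct (Req_dec t x1); [subst; lra|lra]).
    apply (no_upward_crossing g t x1 Ht'); auto.
    - intros u Hu. apply derive_cont. apply Hd. apply (HI y x1); auto; lra.
    - intros u Hu Hu0.
      assert (Pu : P u) by (apply (HI y x1); auto; lra).
      destruct (derive_neg_right g u _ (Derive_correct _ _ (Hd u Pu))
                  (Hneg u Pu ltac:(lra))) as [d [Hd0 Hd1]].
      exists d; split; auto. intros v Hv. specialize (Hd1 v Hv). lra. }
  destruct (mean_value g y x1 ltac:(lra)) as [t [Ht Heq]].
  { intros u Hu. apply Hd. apply (HI y x1); auto. }
  assert (Pt : P t) by (apply (HI y x1); auto).
  specialize (Hneg t Pt ltac:(specialize (Hpos t Ht); lra)).
  specialize (Hle y Py).
  assert (Derive g t * (x1 - y) < 0) by (apply Rmult_neg_pos; lra). lra.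
Qed.

(* Lower barrier principle on an interval P: if g increases at rate at least
   eta * z' wherever g <= 0, g >= - B z, and z > 0 gets arbitrarily small to the
   left of every point, then g >= 0 on P.  (Integrating g' >= eta z' from a point
   where z is tiny contradicts g < 0.) *)
Lemma lower_barrier (P : R -> Prop) (g z : R -> R) (eta B : R) :
  is_interval P -> 0 < eta -> 0 <= B ->
  (forall x, P x -> ex_derive g x) ->
  (forall x, P x -> ex_derive z x) ->
  (forall x, P x -> g x <= 0 -> 0 < Derive g x /\ eta * Derive z x <= Derive g x) ->
  (forall x, P x -> - B * z x <= g x) ->
  (forall x, P x -> 0 < z x) ->
  (forall x eps, P x -> 0 < eps -> exists y, y < x /\ P y /\ z y < eps) ->
  forall x, P x -> 0 <= g x.
Proof.
  intros HI He HB Hd Hdz Hpos Hlow Hz Hlim x1 Px1.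
  destruct (Rle_or_lt 0 (g x1)) as [|Hg]; auto. exfalso.
  assert (Hz1 := Hz x1 Px1).
  destruct (Hlim x1 (eta * z x1 / (eta + B)) Px1) as [y [Hy [Py Hzy]]].
  { apply Rdiv_lt_0_compat; nra. }
  assert (Hneg : forall t, y <= t <= x1 -> g t < 0).
  { intros t Ht. destruct (Rle_or_lt 0 (g t)) as [Hgt|]; auto. exfalso.
    assert (Ht' : t < x1) by (destruct (Req_dec t x1); [subst; lra|lra]).
    apply (no_upward_crossing (fun u => - g u) t x1 Ht'); try lra.
    - intros u Hu. apply (continuous_opp g). apply derive_cont.
      apply Hd. apply (HI y x1); auto; lra.
    - intros u Hu Hu0.
      assert (Pu : P u) by (apply (HI y x1); auto; lra).
      destruct (Hpos u Pu ltac:(lra)) as [Hp _].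
      destruct (derive_pos_right g u _ (Derive_correct _ _ (Hd u Pu)) Hp)
        as [d [Hd0 Hd1]].
      exists d; split; auto. intros v Hv. specialize (Hd1 v Hv). lra. }
  destruct (mean_value (fun t => g t - eta * z t) y x1 ltac:(lra)) as [t [Ht Heq]].
  { intros u Hu. assert (Pu : P u) by (apply (HI y x1); auto).
    exact (ex_derive_minus g (fun t => eta * z t) u (Hd u Pu)
             (ex_derive_scal z eta u (Hdz u Pu))). }
  assert (Pt : P t) by (apply (HI y x1); auto).
  rewrite (Derive_minus g (fun t => eta * z t) t (Hd t Pt)
             (ex_derive_scal z eta t (Hdz t Pt))), Derive_scal in Heq.
  destruct (Hpos t Pt ltac:(specialize (Hneg t Ht); lra)) as [_ Hge].
  assert (0 <= (Derive g t - eta * Derive z t) * (x1 - y)) by (apply Rmult_le_pos; lra).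
  specialize (Hlow y Py).
  assert ((eta + B) * z y < eta * z x1).
  { apply Rmult_lt_compat_l with (r := eta + B) in Hzy; [|lra].
    replace ((eta + B) * (eta * z x1 / (eta + B))) with (eta * z x1) in Hzy
      by (field; lra).
    lra. }
  nra.
Qed.

(** ** Real powers *)

Lemma Rpower_pos x y : 0 < Rpower x y.
Proof. apply exp_pos. Qed.

Lemma Rpower_1_base y : Rpower 1 y = 1.
Proof. unfold Rpower. rewrite ln_1, Rmult_0_r. apply exp_0. Qed.

Lemma spow_pos x y : 0 < x -> spow x y = Rpower x y.
Proof. intro H. unfold spow. destruct (Rle_dec x 0); [lra|auto]. Qed.

Lemma spow_nonpos x y : x <= 0 -> spow x y = 0.
Proof. intro H. unfold spow. destruct (Rle_dec x 0); [auto|lra]. Qed.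

Lemma spow_nonneg x y : 0 <= spow x y.
Proof.
  destruct (Rle_or_lt x 0).
  - rewrite spow_nonpos; lra.
  - rewrite spow_pos by lra. left; apply Rpower_pos.
Qed.

Lemma spow_one x : 0 <= x -> spow x 1 = x.
Proof.
  intro H. destruct (Req_dec x 0) as [->|Hn].
  - apply spow_nonpos; lra.
  - rewrite spow_pos by lra. apply Rpower_1; lra.
Qed.

Lemma Rpower_inv_pow x r : 0 < x -> r <> 0 -> Rpower (Rpower x r) (/ r) = x.
Proof.
  intros Hx Hr. rewrite Rpower_mult, Rinv_r by auto. apply Rpower_1; auto.
Qed.

Lemma Rpower_split x r : 0 < x -> Rpower x r = x * Rpower x (r - 1).
Proof.
  intro Hx. rewrite <- (Rpower_1 x) at 2 by lra. rewrite <- Rpower_plus. f_equal. ring.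
Qed.

Lemma Rpower_root_product A z r s : 0 < A -> 0 < z -> s <> 0 ->
  A * Rpower z r = Rpower (Rpower A (/ s) * Rpower z (r / s)) s.
Proof.
  intros HA Hz Hs.
  rewrite <- Rpower_mult_distr by apply Rpower_pos. rewrite !Rpower_mult.
  replace (/ s * s) with 1 by (field; auto). replace (r / s * s) with r by (field; auto).
  rewrite Rpower_1 by auto. reflexivity.
Qed.

Lemma Rpower_root_gt a b r : 0 < a -> 0 < r -> Rpower a r < b -> a < Rpower b (/ r).
Proof.
  intros Ha Hr H. rewrite <- (Rpower_inv_pow a r) by lra.
  apply Rlt_Rpower_l; [apply Rinv_0_lt_compat; lra|]. split; [apply Rpower_pos|auto].
Qed.

Lemma Rpower_root_lt a b r : 0 < a -> 0 < b -> 0 < r -> b < Rpower a r -> Rpower b (/ r) < a.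
Proof.
  intros Ha Hb Hr H. rewrite <- (Rpower_inv_pow a r) by lra.
  apply Rlt_Rpower_l; [apply Rinv_0_lt_compat; lra|lra].
Qed.

Lemma Rpower_le_self z r : 0 < z <= 1 -> 1 <= r -> Rpower z r <= z.
Proof.
  intros Hz Hr. rewrite Rpower_split by lra.
  assert (Rpower z (r - 1) <= 1).
  { rewrite <- (Rpower_1_base (r - 1)) at 2. apply Rle_Rpower_l; lra. }
  assert (0 < Rpower z (r - 1)) by apply Rpower_pos. nra.
Qed.

Lemma spow_le_Rpower w r B : 0 < r -> 0 < B ->
  spow w r <= Rpower B r -> w <= B.
Proof.
  intros Hr HB H. destruct (Rle_or_lt w 0) as [|Hw]; [lra|].
  rewrite spow_pos in H by lra.
  destruct (Rle_or_lt w B) as [|Hlt]; auto.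
  assert (Rpower B r < Rpower w r) by (apply Rlt_Rpower_l; lra). lra.
Qed.

Lemma Rpower_le_spow w r B : 0 < r -> 0 < B ->
  Rpower B r <= spow w r -> B <= w.
Proof.
  intros Hr HB H. destruct (Rle_or_lt w 0) as [Hw|Hw].
  - rewrite spow_nonpos in H by lra. assert (0 < Rpower B r) by apply Rpower_pos. lra.
  - rewrite spow_pos in H by lra.
    destruct (Rle_or_lt B w) as [|Hlt]; auto.
    assert (Rpower w r < Rpower B r) by (apply Rlt_Rpower_l; lra). lra.
Qed.

Lemma Rpower_small r eps : 0 < r -> 0 < eps ->
  exists d, 0 < d /\ forall z, 0 < z < d -> Rpower z r < eps.
Proof.
  intros Hr He. exists (Rpower eps (/ r)). split; [apply Rpower_pos|].
  intros z Hz.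
  assert (Heq : Rpower (Rpower eps (/ r)) r = eps).
  { rewrite Rpower_mult, Rinv_l by lra. apply Rpower_1; auto. }
  rewrite <- Heq. apply Rlt_Rpower_l; auto.
Qed.

Lemma Rpower_near_1 r eps : 0 < eps -> exists d, 0 < d /\
  forall u, Rabs (u - 1) < d -> Rabs (Rpower u r - 1) < eps.
Proof.
  intros He.
  assert (Hc : continuous (fun x => Rpower x r) 1).
  { apply derive_cont. exists (r * Rpower 1 (r - 1)).
    apply is_derive_Reals, derivable_pt_lim_power. lra. }
  destruct (continuous_eps _ 1 Hc eps He) as [d [Hd Hd']].
  exists d; split; auto. intros u Hu. specialize (Hd' u Hu).
  rewrite Rpower_1_base in Hd'. auto.
Qed.

Lemma inv_near A m r : 0 < m -> 0 < r ->
  exists e, 0 < e < m / 2 /\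
    forall D, m - e < D < m + e -> A / m - r < A / D < A / m + r.
Proof.
  intros Hm Hr.
  assert (Hc : continuous (fun D => A / D) m).
  { apply derive_cont. auto_derive. lra. }
  destruct (continuous_eps _ m Hc r Hr) as [d [Hd Hd']].
  exists (Rmin d (m / 4)). split.
  { split; [apply Rmin_glb_lt; lra|]. assert (Rmin d (m / 4) <= m / 4) by apply Rmin_r. lra. }
  intros D HD. assert (Rmin d (m / 4) <= d) by apply Rmin_l.
  specialize (Hd' D ltac:(apply Rabs_def1; lra)). apply Rabs_def2 in Hd'. lra.
Qed.

Lemma mul_div_le a u v D : 0 <= a -> 0 < D -> u <= v -> a * (u / D) <= a * (v / D).
Proof.
  intros Ha HD Huv. apply Rmult_le_compat_l; [lra|]. unfold Rdiv.
  apply Rmult_le_compat_r; [left; apply Rinv_0_lt_compat|]; lra.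
Qed.

Lemma div_half_le u B m D : 0 < m -> 0 <= u <= B -> m / 2 < D -> u / D <= 2 * B / m.
Proof.
  intros Hm Hu HD. replace (2 * B / m) with (B / (m / 2)) by (field; lra).
  apply Rle_trans with (B / D).
  - unfold Rdiv. apply Rmult_le_compat_r; [left; apply Rinv_0_lt_compat|]; lra.
  - unfold Rdiv. apply Rmult_le_compat_l; [lra|]. apply Rinv_le_contravar; lra.
Qed.

(** ** The reaction term near its stable zero u = 1 *)

Lemma standing_h_slope m a h : standing_h m a h -> Derive h 1 < 0.
Proof. intros [_ [_ [_ [_ [_ [_ [_ [Hd1 _]]]]]]]]. exact Hd1. Qed.

(* h > 0 on (a, 1) and h < 0 on (1, oo), so continuity forces h 1 = 0. *)
Lemma h_zero_at_1 m a h : standing_h m a h -> h 1 = 0.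
Proof.
  intros [_ [Hd [_ [Ha [_ [Hpos [Hneg _]]]]]]].
  assert (Hc : continuous h 1) by (apply derive_cont; apply Hd; lra).
  destruct (Rtotal_order (h 1) 0) as [Hl|[He|Hg]]; auto; exfalso.
  - destruct (continuous_eps h 1 Hc (- h 1) ltac:(lra)) as [d [Hdd Hdd']].
    set (y := 1 - Rmin d (1 - a) / 2).
    assert (0 < Rmin d (1 - a)) by (apply Rmin_glb_lt; lra).
    assert (Rmin d (1 - a) <= d) by apply Rmin_l.
    assert (Rmin d (1 - a) <= 1 - a) by apply Rmin_r.
    specialize (Hdd' y ltac:(unfold y; rewrite Rabs_left1; lra)).
    specialize (Hpos y ltac:(unfold y; lra)).
    apply Rabs_def2 in Hdd'. lra.
  - destruct (continuous_eps h 1 Hc (h 1) ltac:(lra)) as [d [Hdd Hdd']].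
    specialize (Hdd' (1 + d / 2) ltac:(rewrite Rabs_pos_eq; lra)).
    specialize (Hneg (1 + d / 2) ltac:(lra)). apply Rabs_def2 in Hdd'. lra.
Qed.

Lemma h_linear_at_1 m a h : standing_h m a h ->
  forall eta, 0 < eta -> exists d, 0 < d /\
    forall z, 0 < z < d -> Rabs (h (1 - z) + Derive h 1 * z) <= eta * z.
Proof.
  intros Hh eta He.
  assert (Hh1 := h_zero_at_1 m a h Hh).
  destruct Hh as [_ [Hd _]].
  assert (HD := Derive_correct h 1 (Hd 1 ltac:(lra))).
  apply is_derive_Reals in HD.
  destruct (HD eta He) as [d Hdl].
  exists d. split; [apply cond_pos|].
  intros z Hz.
  specialize (Hdl (- z) ltac:(lra) ltac:(rewrite Rabs_Ropp, Rabs_pos_eq; lra)).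
  replace (1 + - z) with (1 - z) in Hdl by ring. rewrite Hh1, Rminus_0_r in Hdl.
  replace (h (1 - z) + Derive h 1 * z) with ((- z) * (h (1 - z) / - z - Derive h 1))
    by (field; lra).
  rewrite Rabs_mult, Rabs_Ropp, (Rabs_pos_eq z) by lra. nra.
Qed.

Lemma near_one_bounds m a h : 0 < m -> standing_h m a h ->
  forall eD eh, 0 < eD -> 0 < eh -> exists d, 0 < d <= 1 / 2 /\
    forall u, 1 - d < u < 1 ->
      m - eD < m * Rpower u (m - 1) < m + eD /\
      Rabs (h u + Derive h 1 * (1 - u)) <= eh * (1 - u).
Proof.
  intros Hm Hh eD eh HeD Heh.
  destruct (Rpower_near_1 (m - 1) (eD / m) ltac:(apply Rdiv_lt_0_compat; lra))
    as [d1 [Hd1 H1]].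
  destruct (h_linear_at_1 m a h Hh eh Heh) as [d2 [Hd2 H2]].
  set (d := Rmin (Rmin d1 d2) (1 / 2)).
  assert (Hdd1 : d <= d1) by (unfold d; eapply Rle_trans; [apply Rmin_l|apply Rmin_l]).
  assert (Hdd2 : d <= d2) by (unfold d; eapply Rle_trans; [apply Rmin_l|apply Rmin_r]).
  assert (Hdd3 : d <= 1 / 2) by (unfold d; apply Rmin_r).
  assert (Hd0 : 0 < d) by (unfold d; repeat apply Rmin_glb_lt; lra).
  exists d. split; [lra|].
  intros u Hu. split.
  - specialize (H1 u ltac:(rewrite Rabs_left1; lra)).
    apply Rabs_def2 in H1.
    assert (m * (eD / m) = eD) by (field; lra). nra.
  - specialize (H2 (1 - u) ltac:(lra)). replace (1 - (1 - u)) with u in H2 by ring.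
    exact H2.
Qed.

Lemma near_one_bounds_power m a h : 0 < m -> standing_h m a h ->
  forall eD eh r s, 0 < eD -> 0 < eh -> 0 < r -> 0 < s -> exists d, 0 < d <= 1 / 2 /\
    forall u, 1 - d < u < 1 ->
      (m - eD < m * Rpower u (m - 1) < m + eD /\
       Rabs (h u + Derive h 1 * (1 - u)) <= eh * (1 - u)) /\
      Rpower (1 - u) r < s.
Proof.
  intros Hm Hh eD eh r s HeD Heh Hr Hs.
  destruct (near_one_bounds m a h Hm Hh eD eh HeD Heh) as [d0 [Hd0 Hnear]].
  destruct (Rpower_small r s Hr Hs) as [ds [Hds Hsmall]].
  exists (Rmin d0 ds).
  assert (Rmin d0 ds <= d0) by apply Rmin_l. assert (Rmin d0 ds <= ds) by apply Rmin_r.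
  split; [split; [apply Rmin_glb_lt|]; lra|].
  intros u Hu. split; [apply Hnear; lra|apply Hsmall; lra].
Qed.

(** ** Abstract front profiles *)

(* What the asymptotic analysis uses of a wavefront U, written in terms of the
   flux magnitude w = |(U^m)'| and phi = w^(p-1): U is continuous, nonincreasing,
   bounded by 1 and tends to 1 at -oo; w is continuous and vanishes where U = 1;
   and where U > 0 the profile equation holds in the first-order form
   U' = - w / (m U^(m-1)),  phi' = c U' - gam phi + h(U). *)
Record front_profile (m p c gam : R) (h U phi w : R -> R) : Prop := {
  fp_cont : forall x, continuous U x;
  fp_mono : forall x y, x <= y -> U y <= U x;
  fp_le1 : forall x, U x <= 1;
  fp_lim : forall eps, 0 < eps -> exists M, forall x, x < M -> 1 - eps < U x;
  fp_w_cont : forall x, continuous w x;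
  fp_w_at1 : forall x, U x = 1 -> w x = 0;
  fp_dU : forall x, 0 < U x -> ex_derive U x;
  fp_dphi : forall x, 0 < U x -> ex_derive phi x;
  fp_w_nonneg : forall x, 0 < U x -> 0 <= w x;
  fp_DU : forall x, 0 < U x -> Derive U x = - w x / (m * Rpower (U x) (m - 1));
  fp_Dphi : forall x, 0 < U x -> Derive phi x = c * Derive U x - gam * phi x + h (U x);
  fp_phi : forall x, 0 < U x -> phi x = spow (w x) (p - 1) }.
Arguments fp_cont {m p c gam h U phi w} _.
Arguments fp_mono {m p c gam h U phi w} _.
Arguments fp_le1 {m p c gam h U phi w} _.
Arguments fp_lim {m p c gam h U phi w} _.
Arguments fp_w_cont {m p c gam h U phi w} _.
Arguments fp_w_at1 {m p c gam h U phi w} _.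
Arguments fp_dU {m p c gam h U phi w} _.
Arguments fp_dphi {m p c gam h U phi w} _.
Arguments fp_w_nonneg {m p c gam h U phi w} _.
Arguments fp_DU {m p c gam h U phi w} _.
Arguments fp_Dphi {m p c gam h U phi w} _.
Arguments fp_phi {m p c gam h U phi w} _.

Section Comparison.

Variables (m p c gam : R) (h U phi w : R -> R).
Hypothesis Hm : 0 < m.
Hypothesis Hp : 1 < p.
Hypothesis HS : front_profile m p c gam h U phi w.

Lemma phi_nonneg x : 0 < U x -> 0 <= phi x.
Proof. intro Hx. rewrite (fp_phi HS x Hx). apply spow_nonneg. Qed.

Lemma flux_le_of_phi_le x A z r : 0 < U x -> 0 < A -> 0 < z ->
  phi x <= A * Rpower z r -> w x <= Rpower A (/ (p - 1)) * Rpower z (r / (p - 1)).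
Proof.
  intros Hx HA Hz Hle. apply (spow_le_Rpower _ (p - 1)); [lra| |].
  - apply Rmult_lt_0_compat; apply Rpower_pos.
  - rewrite <- Rpower_root_product, <- (fp_phi HS x Hx) by lra. exact Hle.
Qed.

Lemma flux_ge_of_phi_ge x A z r : 0 < U x -> 0 < A -> 0 < z ->
  A * Rpower z r <= phi x -> Rpower A (/ (p - 1)) * Rpower z (r / (p - 1)) <= w x.
Proof.
  intros Hx HA Hz Hle. apply (Rpower_le_spow _ (p - 1)); [lra| |].
  - apply Rmult_lt_0_compat; apply Rpower_pos.
  - rewrite <- Rpower_root_product, <- (fp_phi HS x Hx) by lra. exact Hle.
Qed.

Lemma near_one_interval d : is_interval (fun x => 1 - d < U x < 1).
Proof.
  intros x y t Hx Hy Ht.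
  assert (U t <= U x) by (apply (fp_mono HS); lra).
  assert (U y <= U t) by (apply (fp_mono HS); lra). lra.
Qed.

Lemma near_one_small_gap d x1 eps : 1 - d < U x1 < 1 -> 0 < eps ->
  exists y, y < x1 /\ (1 - d < U y < 1) /\ 1 - U y < eps.
Proof.
  intros Hx1 He.
  set (e := Rmin eps (1 - U x1)).
  assert (He1 : 0 < e) by (apply Rmin_glb_lt; lra).
  assert (He2 : e <= eps) by apply Rmin_l.
  assert (He3 : e <= 1 - U x1) by apply Rmin_r.
  destruct (fp_lim HS (e / 2) ltac:(lra)) as [M HM].
  set (y0 := Rmin M x1 - 1).
  assert (Rmin M x1 <= x1) by apply Rmin_r. assert (Rmin M x1 <= M) by apply Rmin_l.
  assert (Hy0 : y0 < x1) by (unfold y0; lra).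
  assert (HUy0 : 1 - e / 2 < U y0) by (apply HM; unfold y0; lra).
  assert (Hcont : continuity U)
    by (intro x; apply continuity_pt_filterlim; apply (fp_cont HS)).
  destruct (IVT_gen U y0 x1 (1 - e / 2) Hcont) as [y [Hy HUy]].
  { rewrite Rmin_right, Rmax_left; lra. }
  rewrite Rmin_left, Rmax_right in Hy by lra.
  exists y. assert (y <> x1) by (intro; subst; lra).
  assert (U x1 <= U y) by (apply (fp_mono HS); lra).
  split; [lra|]. split; lra.
Qed.

(* If w >= k0 > 0 on the part of the region left of x1, then U < 1 everywhere
   left of x1: otherwise, by the intermediate value theorem, w would take the
   value k0 / 2 between a point where U = 1 (so w = 0) and x1. *)
Lemma below_one_left d x1 k0 : 0 < k0 -> 1 - d < U x1 < 1 ->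
  (forall y, y <= x1 -> 1 - d < U y < 1 -> k0 <= w y) ->
  forall y, y <= x1 -> U y < 1.
Proof.
  intros Hk0 Hx1 Hwk y1 Hy1.
  destruct (Req_dec (U y1) 1) as [HU1y|HU1y]; [|pose proof (fp_le1 HS y1); lra].
  exfalso.
  assert (Hy1' : y1 < x1) by (destruct (Req_dec y1 x1); [subst; lra|lra]).
  assert (Hcont : continuity w)
    by (intro x; apply continuity_pt_filterlim, (fp_w_cont HS)).
  assert (Hwx1 := Hwk x1 ltac:(lra) Hx1).
  assert (Hwy1 := fp_w_at1 HS y1 HU1y).
  destruct (IVT_gen w y1 x1 (k0 / 2) Hcont) as [t [Ht Hwt]].
  { rewrite Rmin_left, Rmax_right; lra. }
  rewrite Rmin_left, Rmax_right in Ht by lra.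
  destruct (Req_dec (U t) 1) as [HUt|HUt].
  - rewrite (fp_w_at1 HS t HUt) in Hwt. lra.
  - assert (U x1 <= U t) by (apply (fp_mono HS); lra).
    pose proof (fp_le1 HS t).
    specialize (Hwk t ltac:(lra) ltac:(lra)). lra.
Qed.

(* If U stays in the region left of x1 with w >= k0 > 0 and bounded diffusivity,
   then U' <= - k0 / Dmax there, so U would exceed 1 far to the left. *)
Lemma no_uniform_descent d Dmax x1 k0 : 0 < k0 -> 0 < d <= 1 -> 0 < Dmax ->
  (forall x, 1 - d < U x < 1 -> m * Rpower (U x) (m - 1) <= Dmax) ->
  (forall y, y <= x1 -> 1 - d < U y < 1) ->
  (forall y, y <= x1 -> k0 <= w y) -> False.
Proof.
  intros Hk0 Hd HDm HDle HP Hwk.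
  set (T := 2 * Dmax / k0).
  assert (HT : 0 < T) by (unfold T; apply Rdiv_lt_0_compat; lra).
  destruct (mean_value U (x1 - T) x1 ltac:(lra)) as [t [Ht Heq]].
  { intros u Hu. apply (fp_dU HS). destruct (HP u ltac:(lra)). lra. }
  destruct (HP t ltac:(lra)) as [HPt1 HPt2].
  assert (HDpos : 0 < m * Rpower (U t) (m - 1))
    by (apply Rmult_lt_0_compat; [lra|apply Rpower_pos]).
  assert (HDt := HDle t ltac:(lra)).
  assert (Hwt := Hwk t ltac:(lra)).
  assert (Hrate : k0 / Dmax <= w t / (m * Rpower (U t) (m - 1))).
  { apply Rle_trans with (w t / Dmax).
    - unfold Rdiv. apply Rmult_le_compat_r; [left; apply Rinv_0_lt_compat|]; lra.
    - unfold Rdiv. apply Rmult_le_compat_l; [lra|]. apply Rinv_le_contravar; lra. }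
  rewrite (fp_DU HS) in Heq by lra.
  replace (x1 - (x1 - T)) with T in Heq by ring.
  assert (k0 / Dmax * T = 2) by (unfold T; field; lra).
  assert (k0 / Dmax * T <= w t / (m * Rpower (U t) (m - 1)) * T)
    by (apply Rmult_le_compat_r; lra).
  pose proof (fp_le1 HS (x1 - T)).
  destruct (HP x1 ltac:(lra)). lra.
Qed.

(* To the left of any point of the region, phi becomes arbitrarily small inside
   the region: otherwise w = phi^(1/(p-1)) would stay bounded below there, which
   the two previous lemmas exclude. *)
Lemma near_one_small_flux d Dmax x1 eps : 0 < d <= 1 -> 0 < Dmax ->
  (forall x, 1 - d < U x < 1 -> m * Rpower (U x) (m - 1) <= Dmax) ->
  1 - d < U x1 < 1 -> 0 < eps ->
  exists y, y <= x1 /\ (1 - d < U y < 1) /\ phi y < eps.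
Proof.
  intros Hd HDm HDle Hx1 He.
  apply NNPP. intro Hn.
  set (k0 := Rpower eps (/ (p - 1))).
  assert (Hk0 : 0 < k0) by apply Rpower_pos.
  assert (Hwk : forall y, y <= x1 -> 1 - d < U y < 1 -> k0 <= w y).
  { intros y Hy HPy.
    destruct (Rle_or_lt eps (phi y)) as [Hge|]; [|exfalso; apply Hn; exists y; auto].
    apply (Rpower_le_spow _ (p - 1)); [lra|auto|].
    rewrite <- (fp_phi HS) by lra. unfold k0.
    rewrite Rpower_mult, Rinv_l, Rpower_1; lra. }
  assert (HP : forall y, y <= x1 -> 1 - d < U y < 1).
  { intros y Hy. assert (U x1 <= U y) by (apply (fp_mono HS); lra).
    assert (U y < 1) by exact (below_one_left d x1 k0 Hk0 Hx1 Hwk y Hy). lra. }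
  apply (no_uniform_descent d Dmax x1 k0); auto.
Qed.

Lemma comparison_derive A r x : 0 < U x < 1 ->
  ex_derive (fun t => phi t - A * Rpower (1 - U t) r) x /\
  Derive (fun t => phi t - A * Rpower (1 - U t) r) x =
    - (c + A * r * Rpower (1 - U x) (r - 1)) * (w x / (m * Rpower (U x) (m - 1)))
    - gam * phi x + h (U x).
Proof.
  intros Hx.
  assert (HdU := fp_dU HS x ltac:(lra)).
  assert (Hdphi := fp_dphi HS x ltac:(lra)).
  assert (HP : is_derive (fun y => Rpower y r) (1 - U x) (r * Rpower (1 - U x) (r - 1)))
    by (apply is_derive_Reals, derivable_pt_lim_power; lra).
  assert (HZ : is_derive (fun t => 1 - U t) x (- Derive U x)).
  { auto_derive; [repeat split; auto|]. change (fun x0 : R => U x0) with U. ring. }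
  assert (HC := is_derive_comp (fun y => Rpower y r) (fun t => 1 - U t) _ _ _ HP HZ).
  assert (HD : is_derive (fun t => phi t - A * Rpower (1 - U t) r) x
                 (Derive phi x - A * (- Derive U x * (r * Rpower (1 - U x) (r - 1))))).
  { apply (is_derive_minus phi (fun t => A * Rpower (1 - U t) r)).
    - apply Derive_correct. exact Hdphi.
    - apply (is_derive_scal (fun t => Rpower (1 - U t) r)). exact HC. }
  split; [eexists; eauto|]. apply is_derive_unique.
  match goal with |- is_derive _ _ ?v => replace v with
    (Derive phi x - A * (- Derive U x * (r * Rpower (1 - U x) (r - 1)))) end; [exact HD|].
  rewrite (fp_Dphi HS x), (fp_DU HS x) by lra.
  unfold Rdiv. ring.
Qed.

Lemma upper_comparison A r d Dmax : 0 < A -> 0 < d <= 1 -> 0 < Dmax ->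
  (forall x, 1 - d < U x < 1 -> m * Rpower (U x) (m - 1) <= Dmax) ->
  (forall x, 1 - d < U x < 1 -> A * Rpower (1 - U x) r <= phi x ->
     - (c + A * r * Rpower (1 - U x) (r - 1)) * (w x / (m * Rpower (U x) (m - 1)))
     - gam * phi x + h (U x) < 0) ->
  forall x, 1 - d < U x < 1 -> phi x <= A * Rpower (1 - U x) r.
Proof.
  intros HA Hd HDm HDle Hkey x0 Hx0.
  set (g := fun t => phi t - A * Rpower (1 - U t) r).
  cut (g x0 <= 0); [unfold g; lra|].
  apply (upper_barrier (fun x => 1 - d < U x < 1) g phi); auto.
  - apply near_one_interval.
  - intros x Hx. apply (comparison_derive A r x). lra.
  - intros x Hx Hgx. unfold g in *. rewrite (proj2 (comparison_derive A r x ltac:(lra))).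
    apply Hkey; auto. lra.
  - intros x Hx. unfold g.
    assert (0 < A * Rpower (1 - U x) r) by (apply Rmult_lt_0_compat; [lra|apply Rpower_pos]).
    lra.
  - intros x eps Hx He. apply (near_one_small_flux d Dmax); auto.
Qed.

Lemma lower_comparison A r eta d : 0 < A -> 1 <= r -> 0 < eta -> 0 < d <= 1 ->
  (forall x, 1 - d < U x < 1 -> phi x <= A * Rpower (1 - U x) r ->
     eta * (w x / (m * Rpower (U x) (m - 1))) <
     - (c + A * r * Rpower (1 - U x) (r - 1)) * (w x / (m * Rpower (U x) (m - 1)))
     - gam * phi x + h (U x)) ->
  forall x, 1 - d < U x < 1 -> A * Rpower (1 - U x) r <= phi x.
Proof.
  intros HA Hr He Hd Hkey x0 Hx0.
  set (g := fun t => phi t - A * Rpower (1 - U t) r).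
  cut (0 <= g x0); [unfold g; lra|].
  assert (Hgap : forall x, 0 < U x ->
            is_derive (fun t : R => 1 - U t) x (w x / (m * Rpower (U x) (m - 1)))).
  { intros x Hx. assert (HdU := fp_dU HS x Hx).
    auto_derive; [repeat split; auto|].
    change (fun x0 : R => U x0) with U. rewrite (fp_DU HS x Hx).
    unfold Rdiv. ring. }
  apply (lower_barrier (fun x => 1 - d < U x < 1) g (fun t => 1 - U t) eta A);
    auto; try lra.
  - apply near_one_interval.
  - intros x Hx. apply (comparison_derive A r x). lra.
  - intros x Hx. eexists. apply Hgap. lra.
  - intros x Hx Hgx. unfold g.
    rewrite (proj2 (comparison_derive A r x ltac:(lra))),
            (is_derive_unique _ _ _ (Hgap x ltac:(lra))).
    assert (Hlt := Hkey x Hx ltac:(unfold g in Hgx; lra)).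
    assert (0 <= w x / (m * Rpower (U x) (m - 1))).
    { apply Rdiv_le_0_compat; [apply (fp_w_nonneg HS); lra|].
      apply Rmult_lt_0_compat; [lra|apply Rpower_pos]. }
    split; nra.
  - intros x Hx. unfold g.
    assert (Rpower (1 - U x) r <= 1 - U x) by (apply Rpower_le_self; lra).
    assert (0 <= phi x) by (apply phi_nonneg; lra). nra.
  - intros x Hx. lra.
  - intros x eps Hx Heps.
    destruct (near_one_small_gap d x eps Hx Heps) as [y Hy]. exists y. exact Hy.
Qed.

End Comparison.

(** ** From two-sided bounds to the asymptotic equivalence *)

Lemma asymp_of_bounds (U phi : R -> R) C mu : 0 < C ->
  (forall x, 0 < U x -> 0 <= phi x) ->
  (forall K, C < K -> exists d, 0 < d /\
     forall x, 1 - d < U x < 1 -> phi x <= K * Rpower (1 - U x) mu) ->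
  (forall K, 0 < K < C -> exists d, 0 < d /\
     forall x, 1 - d < U x < 1 -> K * Rpower (1 - U x) mu <= phi x) ->
  forall eps, 0 < eps -> exists d, 0 < d /\ forall x, 1 - d < U x < 1 ->
    Rabs (phi x - C * Rpower (1 - U x) mu) <= eps * (C * Rpower (1 - U x) mu).
Proof.
  intros HC Hphi Hup Hlow eps He.
  destruct (Hup ((1 + eps) * C) ltac:(nra)) as [d1 [Hd1 H1]].
  assert (Hpos : forall x, 0 < C * Rpower (1 - U x) mu)
    by (intro x; apply Rmult_lt_0_compat; [lra|apply Rpower_pos]).
  destruct (Rlt_or_le eps 1) as [Hlt|Hge].
  - destruct (Hlow ((1 - eps) * C) ltac:(split; nra)) as [d2 [Hd2 H2]].
    exists (Rmin d1 d2). split; [apply Rmin_glb_lt; auto|].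
    intros x Hx. assert (Rmin d1 d2 <= d1) by apply Rmin_l.
    assert (Rmin d1 d2 <= d2) by apply Rmin_r.
    specialize (H1 x ltac:(lra)). specialize (H2 x ltac:(lra)).
    apply Rabs_le. lra.
  - exists (Rmin d1 1). split; [apply Rmin_glb_lt; lra|].
    intros x Hx. assert (Rmin d1 1 <= d1) by apply Rmin_l.
    assert (Rmin d1 1 <= 1) by apply Rmin_r.
    specialize (H1 x ltac:(lra)). specialize (Hphi x ltac:(lra)).
    specialize (Hpos x). apply Rabs_le. nra.
Qed.

(** ** The three regimes *)

Lemma quadratic_root B m k : 0 < B -> 0 < m -> 0 < k ->
  0 < (- B + sqrt (B ^ 2 + 4 * m * k)) / 2 /\
  ((- B + sqrt (B ^ 2 + 4 * m * k)) / 2) * ((- B + sqrt (B ^ 2 + 4 * m * k)) / 2)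
  + B * ((- B + sqrt (B ^ 2 + 4 * m * k)) / 2) - m * k = 0.
Proof.
  intros HB Hm Hk.
  assert (HS2 : sqrt (B ^ 2 + 4 * m * k) * sqrt (B ^ 2 + 4 * m * k) = B ^ 2 + 4 * m * k)
    by (apply sqrt_sqrt; nra).
  assert (HS0 : 0 <= sqrt (B ^ 2 + 4 * m * k)) by apply sqrt_pos.
  split; nra.
Qed.

Lemma higher_order_bound gam A r K m z y phi wD e :
  0 <= gam -> 0 < A -> 0 < r -> 0 < m -> 0 < z -> 0 <= y ->
  y * (gam * A + 2 * A * r * K / m) <= e ->
  phi <= A * z * y -> wD <= 2 * (K * z) / m ->
  gam * phi + A * r * y * wD <= e * z.
Proof.
  intros Hg HA Hr Hm Hz Hy He Hphi HwD.
  assert (gam * phi <= gam * (A * z * y)) by (apply Rmult_le_compat_l; lra).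
  assert (A * r * y * wD <= A * r * y * (2 * (K * z) / m))
    by (apply Rmult_le_compat_l; [|lra]; assert (0 < A * r) by nra; nra).
  assert (gam * (A * z * y) + A * r * y * (2 * (K * z) / m)
          = y * (gam * A + 2 * A * r * K / m) * z) by (field; lra).
  nra.
Qed.

Section Regimes.

Variables (m p c gam a : R) (h U phi w : R -> R).
Hypothesis Hm : 0 < m.
Hypothesis Hp : 1 < p.
Hypothesis Hc : 0 < c.
Hypothesis Hg : 0 <= gam.
Hypothesis Hh : standing_h m a h.
Hypothesis HS : front_profile m p c gam h U phi w.

Lemma slope_pos : 0 < - Derive h 1.
Proof. pose proof (standing_h_slope m a h Hh). lra. Qed.

(* p > 2: the convective term c U' balances h(U) ~ |h'(1)| (1 - U), giving
   w ~ (m |h'(1)| / c) (1 - U); damping and the variation of the flux power are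
   of higher order. *)
Lemma upper_bound_gt2 : 2 < p ->
  forall A, Rpower (m * (- Derive h 1) / c) (p - 1) < A ->
  exists d, 0 < d /\ forall x, 1 - d < U x < 1 -> phi x <= A * Rpower (1 - U x) (p - 1).
Proof.
  intros Hp2 A HA.
  set (k := - Derive h 1) in *. assert (Hk : 0 < k) by apply slope_pos.
  set (r := p - 1) in *. assert (Hr : 1 < r) by (unfold r; lra).
  assert (HA0 : 0 < A) by (pose proof (Rpower_pos (m * k / c) r); lra).
  set (K := Rpower A (/ r)). assert (HK : 0 < K) by apply Rpower_pos.
  assert (HKL : m * k / c < K)
    by (apply Rpower_root_gt; [apply Rdiv_lt_0_compat; nra|lra|exact HA]).
  set (rho := c * K / m - k).
  assert (Hrho : 0 < rho).
  { replace rho with (c / m * (K - m * k / c)) by (unfold rho; field; lra).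
    apply Rmult_lt_0_compat; [apply Rdiv_lt_0_compat|]; lra. }
  destruct (inv_near (c * K) m (rho / 2) Hm ltac:(lra)) as [eD [HeD Hinv]].
  destruct (near_one_bounds m a h Hm Hh eD (rho / 4) ltac:(lra) ltac:(lra))
    as [d [Hd Hnear]].
  exists d. split; [lra|].
  apply (upper_comparison m p c gam h U phi w Hm Hp HS A r d (m + eD)); try lra.
  { intros x Hx. destruct (Hnear _ Hx). lra. }
  intros x Hx Hle.
  destruct (Hnear _ Hx) as [HD Hhx]. apply Rabs_le_between in Hhx.
  assert (Hw0 : 0 <= w x) by (apply (fp_w_nonneg HS); lra).
  assert (Hphi0 : 0 <= phi x) by (apply (phi_nonneg m p c gam h U phi w HS); lra).
  set (D := m * Rpower (U x) (m - 1)) in *. set (z := 1 - U x) in *.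
  assert (Hz : 0 < z) by (unfold z; lra).
  (* phi >= A z^r = (K z)^r means w >= K z *)
  assert (Hw : K * z <= w x).
  { assert (Hw := flux_ge_of_phi_ge m p c gam h U phi w Hp HS x A z r
                    ltac:(lra) HA0 Hz Hle).
    replace (r / (p - 1)) with 1 in Hw by (unfold r; field; lra).
    rewrite Rpower_1 in Hw by lra. exact Hw. }
  assert (Hconv : (k + rho / 2) * z <= c * (w x / D)).
  { destruct (Hinv D HD) as [Hinv1 _].
    assert (c * (K * z / D) <= c * (w x / D)) by (apply mul_div_le; lra).
    assert (c * (K * z / D) = z * (c * K / D)) by (field; lra).
    assert (c * K / m = k + rho) by (unfold rho; ring). nra. }
  assert (0 <= A * r * Rpower z (r - 1) * (w x / D)).
  { assert (0 < Rpower z (r - 1)) by apply Rpower_pos.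
    apply Rmult_le_pos; [|apply Rdiv_le_0_compat; lra].
    repeat apply Rmult_le_pos; lra. }
  assert (0 <= gam * phi x) by (apply Rmult_le_pos; lra).
  assert (Derive h 1 = - k) by (unfold k; ring).
  assert (0 < rho * z) by nra.
  nra.
Qed.

Lemma lower_bound_gt2 : 2 < p ->
  forall A, 0 < A < Rpower (m * (- Derive h 1) / c) (p - 1) ->
  exists d, 0 < d /\ forall x, 1 - d < U x < 1 -> A * Rpower (1 - U x) (p - 1) <= phi x.
Proof.
  intros Hp2 A HA.
  set (k := - Derive h 1) in *. assert (Hk : 0 < k) by apply slope_pos.
  set (r := p - 1) in *. assert (Hr : 1 < r) by (unfold r; lra).
  set (K := Rpower A (/ r)). assert (HK : 0 < K) by apply Rpower_pos.
  assert (HKL : K < m * k / c)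
    by (apply Rpower_root_lt; [apply Rdiv_lt_0_compat; nra|lra|lra|apply HA]).
  set (rho := k - c * K / m).
  assert (Hrho : 0 < rho).
  { replace rho with (c / m * (m * k / c - K)) by (unfold rho; field; lra).
    apply Rmult_lt_0_compat; [apply Rdiv_lt_0_compat|]; lra. }
  destruct (inv_near (c * K) m (rho / 4) Hm ltac:(lra)) as [eD [HeD Hinv]].
  (* the higher-order terms carry a factor M (1 - U)^(r - 1), made <= rho / 4 *)
  set (M := gam * A + 2 * A * r * K / m).
  assert (HM : 0 < M).
  { assert (0 < 2 * A * r * K / m).
    { apply Rdiv_lt_0_compat; [|lra]. repeat apply Rmult_lt_0_compat; lra. }
    assert (0 <= gam * A) by nra. unfold M; lra. }
  destruct (near_one_bounds_power m a h Hm Hh eD (rho / 4) (r - 1) (rho / (4 * M))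
              ltac:(lra) ltac:(lra) ltac:(lra) ltac:(apply Rdiv_lt_0_compat; lra))
    as [d [Hd Hnear]].
  exists d. split; [lra|].
  set (eta := rho * m / (16 * K)).
  apply (lower_comparison m p c gam h U phi w Hm HS A r eta d); try lra.
  { unfold eta. apply Rdiv_lt_0_compat; nra. }
  intros x Hx Hle.
  destruct (Hnear (U x) Hx) as [[HD Hhx] Hsmall]. apply Rabs_le_between in Hhx.
  assert (Hw0 : 0 <= w x) by (apply (fp_w_nonneg HS); lra).
  set (D := m * Rpower (U x) (m - 1)) in *. set (z := 1 - U x) in *.
  assert (Hz : 0 < z) by (unfold z; lra).
  set (y := Rpower z (r - 1)) in *.
  assert (Hy : 0 < y) by apply Rpower_pos.
  assert (Hphi : phi x <= A * z * y).
  { rewrite (Rpower_split z r) in Hle by lra. unfold y. lra. }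
  (* phi <= A z^r = (K z)^r means w <= K z *)
  assert (Hw : w x <= K * z).
  { assert (Hw := flux_le_of_phi_le m p c gam h U phi w Hp HS x A z r
                    ltac:(lra) ltac:(lra) Hz Hle).
    replace (r / (p - 1)) with 1 in Hw by (unfold r; field; lra).
    rewrite Rpower_1 in Hw by lra. exact Hw. }
  assert (HwD : 0 <= w x / D <= 2 * (K * z) / m).
  { split; [apply Rdiv_le_0_compat; lra|]. apply div_half_le; lra. }
  assert (Hconv : c * (w x / D) <= (k - rho + rho / 4) * z).
  { destruct (Hinv D HD) as [_ Hinv2].
    assert (c * (w x / D) <= c * (K * z / D)) by (apply mul_div_le; lra).
    assert (c * (K * z / D) = z * (c * K / D)) by (field; lra).
    assert (c * K / m = k - rho) by (unfold rho; ring). nra. }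
  assert (Hhigher : gam * phi x + A * r * y * (w x / D) <= rho / 4 * z).
  { apply (higher_order_bound gam A r K m); try lra.
    replace (rho / 4) with (rho / (4 * M) * M) by (field; lra). unfold M in *. nra. }
  assert (Heta : eta * (w x / D) <= rho / 8 * z).
  { assert (eta * (w x / D) <= eta * (2 * (K * z) / m))
      by (apply Rmult_le_compat_l; [unfold eta; apply Rdiv_le_0_compat|]; nra).
    assert (eta * (2 * (K * z) / m) = rho / 8 * z) by (unfold eta; field; lra). lra. }
  assert (Derive h 1 = - k) by (unfold k; ring).
  assert (0 < rho * z) by nra.
  nra.
Qed.

Lemma phi_eq_w : p = 2 -> forall x, 0 < U x -> phi x = w x.
Proof.
  intros Hp2 x Hx. rewrite (fp_phi HS x Hx), Hp2.
  replace (2 - 1) with 1 by ring. apply spow_one, (fp_w_nonneg HS x Hx).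
Qed.

(* p = 2: transport, damping and reaction are all linear in 1 - U, and
   w ~ C (1 - U) where C is the positive root of C^2 + (c + gam m) C = m |h'(1)|. *)
Lemma upper_bound_2 C : p = 2 -> 0 < C ->
  C * C + (c + gam * m) * C - m * (- Derive h 1) = 0 ->
  forall K, C < K -> exists d, 0 < d /\
    forall x, 1 - d < U x < 1 -> phi x <= K * Rpower (1 - U x) 1.
Proof.
  intros Hp2 HC HCeq K HK.
  set (k := - Derive h 1) in *. assert (Hk : 0 < k) by apply slope_pos.
  set (rho := (K * K + (c + gam * m) * K - m * k) / m).
  assert (Hrho : 0 < rho).
  { unfold rho. apply Rdiv_lt_0_compat; auto.
    replace (K * K + (c + gam * m) * K - m * k) with ((K - C) * (K + C + (c + gam * m)))
      by nra.
    apply Rmult_lt_0_compat; nra. }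
  set (A := (c + K) * K).
  destruct (inv_near A m (rho / 2) Hm ltac:(lra)) as [eD [HeD Hinv]].
  destruct (near_one_bounds m a h Hm Hh eD (rho / 4) ltac:(lra) ltac:(lra))
    as [d [Hd Hnear]].
  exists d. split; [lra|].
  apply (upper_comparison m p c gam h U phi w Hm Hp HS K 1 d (m + eD)); try lra.
  { intros x Hx. destruct (Hnear _ Hx). lra. }
  intros x Hx Hle.
  destruct (Hnear _ Hx) as [HD Hhx]. apply Rabs_le_between in Hhx.
  rewrite <- (phi_eq_w Hp2 x) by lra.
  set (D := m * Rpower (U x) (m - 1)) in *. set (z := 1 - U x) in *.
  assert (Hz : 0 < z) by (unfold z; lra).
  rewrite Rpower_1 in Hle by lra.
  replace (1 - 1) with 0 by ring. rewrite Rpower_O by lra.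
  assert (Htrans : z * (A / m - rho / 2) <= (c + K) * (phi x / D)).
  { destruct (Hinv D HD) as [Hinv1 _].
    assert ((c + K) * (K * z / D) <= (c + K) * (phi x / D)) by (apply mul_div_le; lra).
    assert ((c + K) * (K * z / D) = z * (A / D)) by (unfold A; field; lra).
    nra. }
  assert (gam * (K * z) <= gam * phi x) by (apply Rmult_le_compat_l; lra).
  assert (A / m + gam * K = k + rho) by (unfold rho, A; field; lra).
  assert (Derive h 1 = - k) by (unfold k; ring).
  assert (0 < rho * z) by nra.
  nra.
Qed.

Lemma lower_bound_2 C : p = 2 -> 0 < C ->
  C * C + (c + gam * m) * C - m * (- Derive h 1) = 0 ->
  forall K, 0 < K < C -> exists d, 0 < d /\
    forall x, 1 - d < U x < 1 -> K * Rpower (1 - U x) 1 <= phi x.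
Proof.
  intros Hp2 HC HCeq K HK.
  set (k := - Derive h 1) in *. assert (Hk : 0 < k) by apply slope_pos.
  set (rho := (m * k - K * K - (c + gam * m) * K) / m).
  assert (Hrho : 0 < rho).
  { unfold rho. apply Rdiv_lt_0_compat; auto.
    replace (m * k - K * K - (c + gam * m) * K) with ((C - K) * (K + C + (c + gam * m)))
      by nra.
    apply Rmult_lt_0_compat; nra. }
  set (A := (c + K) * K).
  destruct (inv_near A m (rho / 4) Hm ltac:(lra)) as [eD [HeD Hinv]].
  destruct (near_one_bounds m a h Hm Hh eD (rho / 4) ltac:(lra) ltac:(lra))
    as [d [Hd Hnear]].
  exists d. split; [lra|].
  set (eta := rho * m / (8 * K)).
  apply (lower_comparison m p c gam h U phi w Hm HS K 1 eta d); try lra.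
  { unfold eta. apply Rdiv_lt_0_compat; nra. }
  intros x Hx Hle.
  destruct (Hnear _ Hx) as [HD Hhx]. apply Rabs_le_between in Hhx.
  assert (Hphi0 : 0 <= phi x) by (apply (phi_nonneg m p c gam h U phi w HS); lra).
  rewrite <- (phi_eq_w Hp2 x) by lra.
  set (D := m * Rpower (U x) (m - 1)) in *. set (z := 1 - U x) in *.
  assert (Hz : 0 < z) by (unfold z; lra).
  rewrite Rpower_1 in Hle by lra.
  replace (1 - 1) with 0 by ring. rewrite Rpower_O by lra.
  assert (HwD : 0 <= phi x / D <= 2 * (K * z) / m).
  { split; [apply Rdiv_le_0_compat; lra|]. apply div_half_le; lra. }
  assert (Htrans : (c + K) * (phi x / D) <= z * (A / m + rho / 4)).
  { destruct (Hinv D HD) as [_ Hinv2].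
    assert ((c + K) * (phi x / D) <= (c + K) * (K * z / D)) by (apply mul_div_le; lra).
    assert ((c + K) * (K * z / D) = z * (A / D)) by (unfold A; field; lra).
    nra. }
  assert (gam * phi x <= gam * (K * z)) by (apply Rmult_le_compat_l; lra).
  assert (Heta : eta * (phi x / D) <= rho / 4 * z).
  { assert (eta * (phi x / D) <= eta * (2 * (K * z) / m))
      by (apply Rmult_le_compat_l; [unfold eta; apply Rdiv_le_0_compat|]; nra).
    assert (eta * (2 * (K * z) / m) = rho / 4 * z) by (unfold eta; field; lra). lra. }
  assert (A / m + gam * K = k - rho) by (unfold rho, A; field; lra).
  assert (Derive h 1 = - k) by (unfold k; ring).
  assert (0 < rho * z) by nra.
  nra.
Qed.

(* gam > 0 and p < 2: damping gam phi balances h(U) ~ |h'(1)| (1 - U), while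
   the transport term is of order (1 - U)^(1/(p-1)) = o(1 - U).  The upper
   bound only uses that transport has the right sign, so it holds for all p. *)
Lemma upper_bound_damped : 0 < gam ->
  forall K, - Derive h 1 / gam < K -> exists d, 0 < d /\
    forall x, 1 - d < U x < 1 -> phi x <= K * Rpower (1 - U x) 1.
Proof.
  intros Hg0 K HK.
  set (k := - Derive h 1) in *. assert (Hk : 0 < k) by apply slope_pos.
  assert (Hrho : 0 < gam * K - k).
  { apply Rmult_lt_compat_l with (r := gam) in HK; [|lra].
    replace (gam * (k / gam)) with k in HK by (field; lra). lra. }
  assert (HK0 : 0 < K) by (pose proof (Rdiv_lt_0_compat k gam Hk Hg0); lra).
  destruct (near_one_bounds m a h Hm Hh (m / 2) ((gam * K - k) / 2) ltac:(lra) ltac:(lra))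
    as [d [Hd Hnear]].
  exists d. split; [lra|].
  apply (upper_comparison m p c gam h U phi w Hm Hp HS K 1 d (m + m / 2)); try lra.
  { intros x Hx. destruct (Hnear _ Hx). lra. }
  intros x Hx Hle.
  destruct (Hnear _ Hx) as [HD Hhx]. apply Rabs_le_between in Hhx.
  assert (Hw0 : 0 <= w x) by (apply (fp_w_nonneg HS); lra).
  set (D := m * Rpower (U x) (m - 1)) in *. set (z := 1 - U x) in *.
  assert (Hz : 0 < z) by (unfold z; lra).
  rewrite Rpower_1 in Hle by lra.
  assert (0 <= (c + K * 1 * Rpower z (1 - 1)) * (w x / D)).
  { apply Rmult_le_pos; [|apply Rdiv_le_0_compat; lra].
    assert (0 < Rpower z (1 - 1)) by apply Rpower_pos. nra. }
  assert (gam * (K * z) <= gam * phi x) by (apply Rmult_le_compat_l; lra).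
  assert (Derive h 1 = - k) by (unfold k; ring).
  assert (0 < (gam * K - k) * z) by nra.
  nra.
Qed.

Lemma lower_bound_damped : p < 2 -> 0 < gam ->
  forall K, 0 < K < - Derive h 1 / gam -> exists d, 0 < d /\
    forall x, 1 - d < U x < 1 -> K * Rpower (1 - U x) 1 <= phi x.
Proof.
  intros Hp2 Hg0 K HK.
  set (k := - Derive h 1) in *. assert (Hk : 0 < k) by apply slope_pos.
  set (rho := k - gam * K).
  assert (Hrho : 0 < rho).
  { unfold rho. destruct HK as [_ HK].
    apply Rmult_lt_compat_l with (r := gam) in HK; [|lra].
    replace (gam * (k / gam)) with k in HK by (field; lra). lra. }
  set (q := / (p - 1)).
  assert (Hq : 1 < q) by (unfold q; rewrite <- Rinv_1; apply Rinv_lt_contravar; lra).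
  set (Kq := Rpower K q). assert (HKq : 0 < Kq) by apply Rpower_pos.
  (* (1 - U)^(q - 1) is made small enough that transport is negligible *)
  set (s := rho * m / (8 * (c + K) * Kq)).
  assert (Hs : 0 < s).
  { unfold s. apply Rdiv_lt_0_compat; [nra|]. apply Rmult_lt_0_compat; lra. }
  destruct (near_one_bounds_power m a h Hm Hh (m / 2) (rho / 4) (q - 1) s
              ltac:(lra) ltac:(lra) ltac:(lra) Hs) as [d [Hd Hnear]].
  exists d. split; [lra|].
  apply (lower_comparison m p c gam h U phi w Hm HS K 1 (c + K) d); try lra.
  intros x Hx Hle.
  destruct (Hnear (U x) Hx) as [[HD Hhx] Hsmall]. apply Rabs_le_between in Hhx.
  assert (Hw0 : 0 <= w x) by (apply (fp_w_nonneg HS); lra).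
  set (D := m * Rpower (U x) (m - 1)) in *. set (z := 1 - U x) in *.
  assert (Hz : 0 < z) by (unfold z; lra).
  rewrite Rpower_1 in Hle by lra.
  replace (1 - 1) with 0 by ring. rewrite Rpower_O by lra.
  set (y := Rpower z (q - 1)) in *.
  assert (Hy : 0 < y < s) by (split; [apply Rpower_pos|exact Hsmall]).
  (* phi <= K z means w <= (K z)^(1/(p-1)) = Kq z y *)
  assert (Hw : w x <= Kq * z * y).
  { assert (Hw := flux_le_of_phi_le m p c gam h U phi w Hp HS x K z 1
                    ltac:(lra) ltac:(lra) Hz ltac:(rewrite Rpower_1 by lra; exact Hle)).
    replace (1 / (p - 1)) with q in Hw by (unfold q; field; lra).
    rewrite (Rpower_split z q) in Hw by lra.
    change (Rpower K (/ (p - 1))) with Kq in Hw. unfold y. lra. }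
  assert (Htrans : (c + K) * (w x / D) <= rho / 4 * z).
  { assert (w x / D <= 2 * (Kq * z * s) / m)
      by (apply div_half_le; [lra| |lra]; split; nra).
    assert ((c + K) * (2 * (Kq * z * s) / m) = rho / 4 * z) by (unfold s; field; lra).
    assert (0 < c + K) by lra. nra. }
  assert (0 <= w x / D) by (apply Rdiv_le_0_compat; lra).
  assert (gam * phi x <= gam * (K * z)) by (apply Rmult_le_compat_l; lra).
  assert (Derive h 1 = - k) by (unfold k; ring).
  assert (0 < rho * z) by nra.
  unfold rho in *. nra.
Qed.


Lemma asymp_gt2 : 2 < p ->
  forall eps, 0 < eps -> exists d, 0 < d /\ forall x, 1 - d < U x < 1 ->
    Rabs (phi x - Rpower (m * (- Derive h 1) / c) (p - 1) * Rpower (1 - U x) (p - 1))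
    <= eps * (Rpower (m * (- Derive h 1) / c) (p - 1) * Rpower (1 - U x) (p - 1)).
Proof.
  intro Hp2. apply asymp_of_bounds.
  - apply Rpower_pos.
  - apply (phi_nonneg m p c gam h U phi w HS).
  - exact (upper_bound_gt2 Hp2).
  - exact (lower_bound_gt2 Hp2).
Qed.

Lemma asymp_2 : p = 2 ->
  forall eps, 0 < eps -> exists d, 0 < d /\ forall x, 1 - d < U x < 1 ->
    Rabs (phi x - ((- (c + gam * m) + sqrt ((c + gam * m) ^ 2 + 4 * m * (- Derive h 1))) / 2)
                  * Rpower (1 - U x) 1)
    <= eps * (((- (c + gam * m) + sqrt ((c + gam * m) ^ 2 + 4 * m * (- Derive h 1))) / 2)
              * Rpower (1 - U x) 1).
Proof.
  intro Hp2.
  destruct (quadratic_root (c + gam * m) m (- Derive h 1)) as [HC HCeq];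
    [nra|lra|apply slope_pos|].
  apply asymp_of_bounds; auto.
  - apply (phi_nonneg m p c gam h U phi w HS).
  - exact (upper_bound_2 _ Hp2 HC HCeq).
  - exact (lower_bound_2 _ Hp2 HC HCeq).
Qed.

Lemma asymp_lt2 : p < 2 -> 0 < gam ->
  forall eps, 0 < eps -> exists d, 0 < d /\ forall x, 1 - d < U x < 1 ->
    Rabs (phi x - (- Derive h 1 / gam) * Rpower (1 - U x) 1)
    <= eps * ((- Derive h 1 / gam) * Rpower (1 - U x) 1).
Proof.
  intros Hp2 Hg0. apply asymp_of_bounds.
  - apply Rdiv_lt_0_compat; [apply slope_pos|lra].
  - apply (phi_nonneg m p c gam h U phi w HS).
  - exact (upper_bound_damped Hg0).
  - exact (lower_bound_damped Hp2 Hg0).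
Qed.

End Regimes.

(** ** Finite wavefronts are front profiles *)

Lemma nonincreasing_le_limit (U : R -> R) :
  (forall x y, x <= y -> U y <= U x) -> is_lim U m_infty 1 -> forall x, U x <= 1.
Proof.
  intros HUm HUl x. destruct (Rle_or_lt (U x) 1) as [|Hgt]; auto. exfalso.
  apply is_lim_spec in HUl. destruct (HUl (mkposreal (U x - 1) ltac:(lra))) as [M HM].
  set (y := Rmin M x - 1).
  assert (Rmin M x <= M) by apply Rmin_l. assert (Rmin M x <= x) by apply Rmin_r.
  specialize (HM y ltac:(unfold y; lra)). simpl in HM.
  assert (U x <= U y) by (apply HUm; unfold y; lra).
  apply Rabs_def2 in HM. lra.
Qed.

Lemma spow_le_compat x y r : 0 < r -> x <= y -> spow x r <= spow y r.
Proof.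
  intros Hr Hxy. destruct (Rle_or_lt x 0) as [Hx|Hx].
  - rewrite (spow_nonpos x) by lra. apply spow_nonneg.
  - rewrite !spow_pos by lra. apply Rle_Rpower_l; lra.
Qed.

Lemma pflux_nonpos p s : s <= 0 -> - pflux p s = spow (Rabs s) (p - 1).
Proof.
  intro Hs. unfold pflux.
  destruct (Rlt_dec 0 s) as [|_]; [lra|].
  destruct (Rlt_dec s 0) as [Hlt|Hge].
  - rewrite Rabs_left, spow_pos by lra. ring.
  - replace s with 0 by lra. rewrite Rabs_R0, spow_nonpos by lra. ring.
Qed.

Lemma derive_power_of (U : R -> R) m x : 0 < U x -> ex_derive U x ->
  (forall y, continuous U y) ->
  Derive (fun y => spow (U y) m) x = Derive U x * (m * Rpower (U x) (m - 1)).
Proof.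
  intros Hx HdU HUc. apply is_derive_unique.
  apply (is_derive_ext_loc (fun y => Rpower (U y) m)).
  - destruct (continuous_eps U x (HUc x) (U x) Hx) as [d [Hd Hd']].
    exists (mkposreal d Hd). intros t Ht. specialize (Hd' t Ht).
    apply Rabs_def2 in Hd'. rewrite spow_pos by lra. reflexivity.
  - apply (is_derive_comp (fun y => Rpower y m) U).
    + apply is_derive_Reals, derivable_pt_lim_power. auto.
    + apply Derive_correct. auto.
Qed.

(* If U <= 1 is nonincreasing and (U^m)' is continuous, then (U^m)' vanishes
   wherever U = 1: U^m is constant on the half-line to the left of such a point. *)
Lemma derive_power_at_top (U : R -> R) m x :
  (forall x y, x <= y -> U y <= U x) -> (forall y, U y <= 1) ->
  continuous (Derive (fun y => spow (U y) m)) x -> U x = 1 ->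
  Derive (fun y => spow (U y) m) x = 0.
Proof.
  intros HUm HU1 HVc Hx1.
  set (V := fun y => spow (U y) m) in *.
  assert (Hs : forall s, s < x -> Derive V s = 0).
  { intros s Hs. apply is_derive_unique.
    apply (is_derive_ext_loc (fun _ => 1) V).
    - exists (mkposreal (x - s) ltac:(lra)). intros t Ht.
      change (Rabs (t - s) < x - s) in Ht.
      assert (t < x) by (apply Rabs_def2 in Ht; lra).
      assert (U x <= U t) by (apply HUm; lra). specialize (HU1 t).
      unfold V. replace (U t) with 1 by lra. rewrite spow_pos, Rpower_1_base by lra.
      reflexivity.
    - apply is_derive_Reals, derivable_pt_lim_const. }
  destruct (Req_dec (Derive V x) 0) as [|Hn]; auto. exfalso.
  destruct (continuous_eps (Derive V) x HVc (Rabs (Derive V x)) (Rabs_pos_lt _ Hn))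
    as [d [Hd Hd']].
  specialize (Hd' (x - d / 2) ltac:(rewrite Rabs_left1; lra)).
  rewrite (Hs (x - d / 2) ltac:(lra)), Rminus_0_l, Rabs_Ropp in Hd'. lra.
Qed.

(* A finite wavefront is a front profile, with w = |(U^m)'| and
   phi = |(U^m)'|^(p-1) = - |(U^m)'|^(p-2) (U^m)' (the slope is nonpositive). *)
Lemma wavefront_profile m p gam h c U : 0 < m -> 1 < p ->
  finite_wavefront m p gam h c U ->
  front_profile m p c gam h U
    (fun x => spow (Rabs (Derive (fun y => spow (U y) m) x)) (p - 1))
    (fun x => Rabs (Derive (fun y => spow (U y) m) x)).
Proof.
  intros Hm Hp [HUc [HUm [HUl [HVd [HVc [xi0 [Hzero [Hpos Hode]]]]]]]].
  set (V := fun y => spow (U y) m).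
  assert (HU1 := nonincreasing_le_limit U HUm HUl).
  assert (HVneg : forall x, Derive V x <= 0).
  { intro x. apply derive_nonincreasing; [|apply HVd].
    intros s t Hst. apply spow_le_compat; auto. }
  assert (Hflux : forall x, spow (Rabs (Derive V x)) (p - 1) = - pflux p (Derive V x))
    by (intro x; symmetry; apply pflux_nonpos, HVneg).
  assert (Hleft : forall x, 0 < U x -> x < xi0).
  { intros x Hx. destruct (Rlt_or_le x xi0) as [|Hge]; auto.
    rewrite (Hzero x Hge) in Hx. lra. }
  split.
  - exact HUc.
  - exact HUm.
  - exact HU1.
  - intros eps He. apply is_lim_spec in HUl.
    destruct (HUl (mkposreal eps He)) as [M HM].
    exists M. intros x Hx. specialize (HM x Hx). simpl in HM. apply Rabs_def2 in HM. lra.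
  - intro x. apply (continuous_comp (Derive V) Rabs); [apply HVc|apply continuous_Rabs].
  - intros x Hx1. change (Rabs (Derive V x) = 0). unfold V.
    rewrite derive_power_at_top; auto. apply Rabs_R0.
  - intros x Hx. exact (proj1 (Hode x (Hleft x Hx))).
  - intros x Hx. apply (ex_derive_ext (fun t => - pflux p (Derive V t))).
    + intro t. symmetry. apply Hflux.
    + apply (ex_derive_opp (fun t => pflux p (Derive V t))).
      exact (proj1 (proj2 (Hode x (Hleft x Hx)))).
  - intros x Hx. apply Rabs_pos.
  - intros x Hx. cbv beta. fold V. rewrite Rabs_left1 by apply HVneg.
    unfold V. rewrite derive_power_of by (auto; exact (proj1 (Hode x (Hleft x Hx)))).
    field. split; [apply Rgt_not_eq, Rpower_pos|lra].
  - intros x Hx. cbv beta. fold V.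
    destruct (Hode x (Hleft x Hx)) as [_ [HdF Heq]].
    rewrite (Derive_ext _ (fun t => - pflux p (Derive V t))) by (intro t; apply Hflux).
    rewrite (Derive_opp (fun t => pflux p (Derive V t))), Hflux.
    fold V in Heq. lra.
  - intros x Hx. reflexivity.
Qed.

Theorem mainTheorem10 :
  forall (m p a : R) (h : R -> R),
    0 < m -> 1 < p -> 1 < m * (p - 1) ->
    standing_h m a h ->
    exists gstar : R, 0 < gstar /\
      forall (gam c : R) (U : R -> R),
        0 <= gam < gstar -> 0 < c ->
        finite_wavefront m p gam h c U ->
        (2 < p ->
           flux_asymp m p U (Rpower (m * (- Derive h 1) / c) (p - 1)) (p - 1)) /\
        (p = 2 ->
           flux_asymp m p U
             ((- (c + gam * m)
               + sqrt ((c + gam * m) ^ 2 + 4 * m * (- Derive h 1))) / 2) 1) /\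
        (p < 2 -> 0 < gam ->
           flux_asymp m p U ((- Derive h 1) / gam) 1).
Proof.
  intros m p a h Hm Hp _ Hh.
  exists 1. split; [lra|].
  intros gam c U Hg Hc HW.
  pose proof (wavefront_profile m p gam h c U Hm Hp HW) as HS.
  split; [|split].
  - intro Hp2. exact (asymp_gt2 m p c gam a h U _ _ Hm Hp Hc ltac:(lra) Hh HS Hp2).
  - intro Hp2. exact (asymp_2 m p c gam a h U _ _ Hm Hp Hc ltac:(lra) Hh HS Hp2).
  - intros Hp2 Hg0. exact (asymp_lt2 m p c gam a h U _ _ Hm Hp Hc ltac:(lra) Hh HS Hp2 Hg0).
Qed.
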